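(* Assume (H0) and (H3). Let $R,r\ge4$ and let $\varphi:\mathbb R^d\to\mathbb R$ be $c$-concave with $|\varphi|\le R$ on $B_{0,r}$. Then $$\sup_{y\in\partial^c\varphi(B_{0,r/2})}\|y\|^{p-1}\le C_{p,\kappa}\big(r^{p-1}+R\big)$$ for a constant $C_{p,\kappa}>0$ depending only on $p$ and $\kappa$.
   Context: (H0): $c(x,y)=h(x-y)$ with $h:\mathbb R^d\to[0,\infty)$ convex, even, lower semi-continuous. (H3): $h(0)=0$ and there exist $p>1$, $\kappa\ge1$, convex differentiable $\omega$ on $(1,\infty)$ with $h(z)=\omega(\|z\|)$ and $\kappa^{-1}\|z\|^{p-1}\le\omega'(\|z\|)\le\kappa\|z\|^{p-1}$ for $\|z\|>1$. $c$-concave: not identically $-\infty$ and $\varphi(x)=\inf_{(y,\lambda)\in\mathcal A}\{c(x,y)-\lambda\}$ for a nonempty $\mathcal A\subseteq\mathbb R^d\times\mathbb R$. $\partial^c\varphi(x)=\{y: c(v,y)-\varphi(v)\ge c(x,y)-\varphi(x)\ \forall v\}$, $\partial^c\varphi(B)=\bigcup_{x\in B}\partial^c\varphi(x)$. *)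

From HB Require Import structures.
From mathcomp Require Import all_boot all_order all_algebra.
From mathcomp Require Import all_classical all_reals all_analysis.
Set Implicit Arguments. Unset Strict Implicit. Unset Printing Implicit Defensive.
Import Order.TTheory GRing.Theory Num.Theory.
Local Open Scope ring_scope.
Local Open Scope classical_set_scope.

Section Defs.
Variables (R : realType) (d : nat).
Local Notation V := 'rV[R]_d.

Definition enorm (x : V) : R := Num.sqrt (\sum_(i < d) x ord0 i ^+ 2).

Definition cball0 (r : R) : set V := [set x | enorm x <= r].

Definition convex_fun (h : V -> R) : Prop :=
  forall x y (t : R), 0 <= t <= 1 ->
    h (t *: x + (1 - t) *: y) <= t * h x + (1 - t) * h y.

Definition even_fun (h : V -> R) : Prop := forall z, h (- z) = h z.

Definition lsc (h : V -> R) : Prop :=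
  forall x (t : R), t < h x ->
    exists2 delta : R, 0 < delta &
      forall z, enorm (z - x) < delta -> t < h z.

(* (H0) : c(x,y) = h(x-y), h convex, even, lsc, nonnegative *)
Definition H0 (h : V -> R) : Prop :=
  (forall z, 0 <= h z) /\ convex_fun h /\ even_fun h /\ lsc h.

Definition H3 (p kappa : R) (h : V -> R) : Prop :=
  h 0 = 0 /\ 1 < p /\ 1 <= kappa /\
  exists omega : R -> R,
    (forall s1 s2 (t : R), 1 < s1 -> 1 < s2 -> 0 <= t <= 1 ->
        omega (t * s1 + (1 - t) * s2) <= t * omega s1 + (1 - t) * omega s2) /\
    (forall s, 1 < s -> derivable omega s 1) /\
    (forall z, 1 < enorm z -> h z = omega (enorm z)) /\
    (forall z, 1 < enorm z ->
        kappa^-1 * enorm z `^ (p - 1) <= derive1 omega (enorm z) <= kappa * enorm z `^ (p - 1)).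

Definition cost (h : V -> R) (x y : V) : R := h (x - y).

(* phi (real-valued) is c-concave: phi x = inf_{(y,l) in A} (c(x,y) - l), A nonempty *)
Definition c_concave (h : V -> R) (phi : V -> R) : Prop :=
  exists A : set (V * R), A !=set0 /\
    forall x,
      (forall yl, A yl -> phi x <= cost h x yl.1 - yl.2) /\
      (forall e : R, 0 < e -> exists2 yl, A yl & cost h x yl.1 - yl.2 < phi x + e).

Definition c_superdiff (h : V -> R) (phi : V -> R) (x : V) : set V :=
  [set y | forall v, cost h v y - phi v >= cost h x y - phi x].

Definition c_superdiff_set (h : V -> R) (phi : V -> R) (B : set V) : set V :=
  [set y | exists2 x, B x & c_superdiff h phi x y].

End Defs.

From HB Require Import structures.
From mathcomp Require Import all_boot all_order all_algebra.
From mathcomp Require Import all_classical all_reals all_analysis.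
From mathcomp Require Import ring lra.
Import Order.TTheory GRing.Theory Num.Theory.
Local Open Scope ring_scope.

(* Let y be in the c-superdifferential of phi at x, with |x| <= r/2, and put
   D = |x - y|, a = D - r/2.  The point v of the segment [x, y] at distance
   r/2 from x lies in B_{0,r} and satisfies |v - y| = a.  Testing the
   superdifferential inequality at v gives, when a > 1,
       omega(D) - omega(a) = h(x - y) - h(v - y) <= phi(x) - phi(v) <= 2R,
   while the mean value theorem and the lower bound omega' >= s^(p-1)/kappa
   give omega(D) - omega(a) >= a^(p-1) (r/2) / kappa; hence a^(p-1) <= kappa R.
   Since |y| <= r + a <= 2 max(r, a), the theorem follows with
   C = 2^(p-1) kappa. *)

Section EuclideanNorm.
Context {R : realType} {d : nat}.
Implicit Types (a b x y : 'rV[R]_d) (k s : R).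

Lemma sum_sqr_ge0 a : 0 <= \sum_(i < d) a ord0 i ^+ 2.
Proof. by apply: sumr_ge0 => i _; exact: sqr_ge0. Qed.

Lemma enorm_ge0 a : 0 <= enorm a.
Proof. exact: sqrtr_ge0. Qed.

Lemma enorm_sqr a : enorm a ^+ 2 = \sum_(i < d) a ord0 i ^+ 2.
Proof. by rewrite /enorm sqr_sqrtr // sum_sqr_ge0. Qed.

Lemma enormZ k a : enorm (k *: a) = `|k| * enorm a.
Proof.
rewrite /enorm; under eq_bigr => i _ do rewrite mxE exprMn.
by rewrite -mulr_sumr sqrtrM ?sqr_ge0 // sqrtr_sqr.
Qed.

Lemma enormB a b : enorm (a - b) = enorm (b - a).
Proof. by rewrite -opprB -scaleN1r enormZ normrN normr1 mul1r. Qed.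

(* Cauchy-Schwarz, from the nonnegativity of sum_i (|b|^2 a_i - <a,b> b_i)^2. *)
Lemma cauchy_schwarz a b :
  \sum_(i < d) a ord0 i * b ord0 i <= enorm a * enorm b.
Proof.
set SA := \sum_(i < d) a ord0 i ^+ 2.
set SB := \sum_(i < d) b ord0 i ^+ 2.
set Sab := \sum_(i < d) a ord0 i * b ord0 i.
have SB_ge0 : 0 <= SB by exact: sum_sqr_ge0.
have sq_le : Sab ^+ 2 <= SA * SB.
  have [SB0|SB_neq0] := eqVneq SB 0.
    have b0 i : b ord0 i = 0.
      apply/eqP; rewrite -sqrf_eq0; apply/eqP.
      by apply: (psumr_eq0P _ SB0) => // j _; exact: sqr_ge0.
    have -> : Sab = 0 by apply: big1 => i _; rewrite b0 mulr0.
    by rewrite SB0 mulr0 expr0n.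
  have expand : \sum_(i < d) (SB * a ord0 i - Sab * b ord0 i) ^+ 2
              = SB * (SA * SB - Sab ^+ 2).
    rewrite (eq_bigr (fun i => SB ^+ 2 * a ord0 i ^+ 2
        - (2 * SB * Sab) * (a ord0 i * b ord0 i) + Sab ^+ 2 * b ord0 i ^+ 2));
      last by move=> i _; ring.
    by rewrite !big_split /= sumrN -!mulr_sumr -/SA -/SB -/Sab; ring.
  have : 0 <= SB * (SA * SB - Sab ^+ 2).
    by rewrite -expand; apply: sumr_ge0 => i _; exact: sqr_ge0.
  have SB_gt0 : 0 < SB by rewrite lt_def SB_neq0 SB_ge0.
  by rewrite pmulr_rge0 // subr_ge0.
apply: (le_trans (ler_norm Sab)).
by rewrite /enorm -sqrtrM ?sum_sqr_ge0 // -sqrtr_sqr; apply: ler_wsqrtr.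
Qed.

Lemma enormD a b : enorm (a + b) <= enorm a + enorm b.
Proof.
have sq_le : enorm (a + b) ^+ 2 <= (enorm a + enorm b) ^+ 2.
  rewrite enorm_sqr (eq_bigr (fun i => a ord0 i ^+ 2
      + 2 * (a ord0 i * b ord0 i) + b ord0 i ^+ 2)); last by move=> i _; rewrite mxE; ring.
  rewrite !big_split /= -mulr_sumr -!enorm_sqr.
  have := cauchy_schwarz a b; nra.
by rewrite -ler_sqr // nnegrE ?addr_ge0 ?enorm_ge0.
Qed.

Lemma enorm_rescale s a :
  0 < enorm a -> 0 <= s -> enorm ((s / enorm a) *: a) = s.
Proof.
move=> a_gt0 s_ge0; rewrite enormZ ger0_norm ?divfK ?gt_eqF //.
by rewrite divr_ge0 // ltW.
Qed.

Lemma segment_point x y s :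
  0 < enorm (x - y) -> 0 <= s <= enorm (x - y) ->
  exists v, enorm (v - x) = s /\ enorm (v - y) = enorm (x - y) - s.
Proof.
move=> D_gt0 /andP[s_ge0 s_leD]; set D := enorm (x - y) in D_gt0 s_leD *.
set t := s / D.
exists (x + t *: (y - x)); split.
  rewrite addrAC subrr add0r enormZ enormB -/D ger0_norm ?divfK ?gt_eqF //.
  by rewrite divr_ge0 // ltW.
have -> : x + t *: (y - x) - y = (1 - t) *: (x - y).
  by rewrite scalerBl scale1r -[y - x]opprB scalerN addrAC.
have t_le1 : t <= 1 by rewrite ler_pdivrMr // mul1r.
rewrite enormZ ger0_norm ?subr_ge0 // -/D /t; field.
by rewrite gt_eqF.
Qed.

End EuclideanNorm.

Section Growth.
Context {R : realType}.

Lemma increment_lower_bound (f : R -> R) (k q a b : R) :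
  0 <= k -> 0 <= q -> 0 <= a < b ->
  (forall s, a <= s <= b -> derivable f s 1) ->
  (forall s, a < s < b -> k * s `^ q <= derive1 f s) ->
  k * a `^ q * (b - a) <= f b - f a.
Proof.
move=> k_ge0 q_ge0 /andP[a_ge0 ab] f_der f'_ge.
have [c cI ->] : exists2 c, c \in `]a, b[ & f b - f a = derive1 f c * (b - a).
  apply: MVT => // [z|].
    rewrite in_itv /= => /andP[az zb]; rewrite derive1E.
    by apply: derivableP; apply: f_der; rewrite !ltW.
  apply: derivable_within_continuous => z.
  by rewrite in_itv /= => /andP[az zb]; apply: f_der; rewrite az.
move: cI; rewrite in_itv /= => /andP[ac cb].
rewrite ler_pM2r ?subr_gt0 //; apply: le_trans (f'_ge c _); last by rewrite ac.
have c_ge0 : 0 <= c by rewrite (le_trans a_ge0) ?ltW.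
by rewrite ler_wpM2l // ge0_ler_powR ?nnegrE // ltW.
Qed.

End Growth.

(* In dimension d >= 1 (i.e. once some vector is nonzero), the bound of (H3)
   on omega' holds at every radius s > 1, not only along norms of vectors. *)
Lemma H3_derive_lower_bound (R : realType) (d : nat) (p kappa : R)
    (omega : R -> R) (w : 'rV[R]_d) :
  0 < enorm w ->
  (forall z : 'rV[R]_d, 1 < enorm z ->
     kappa^-1 * enorm z `^ (p - 1) <= derive1 omega (enorm z) <= kappa * enorm z `^ (p - 1)) ->
  forall s, 1 < s -> kappa^-1 * s `^ (p - 1) <= derive1 omega s.
Proof.
move=> w_gt0 omega'_bound s s_gt1.
have ws : enorm ((s / enorm w) *: w) = s by rewrite enorm_rescale // ltW // (lt_trans ltr01).
by have := omega'_bound ((s / enorm w) *: w); rewrite ws => /(_ s_gt1) /andP[].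
Qed.

Arguments H3_derive_lower_bound {R d p kappa omega}.

Lemma superdiff_excess_bound (R : realType) (d : nat) (p kappa : R)
    (h : 'rV[R]_d -> R) (phi : 'rV[R]_d -> R) (Rb r s : R) (x y : 'rV[R]_d) :
  H3 p kappa h -> 0 < s -> enorm x + s <= r ->
  (forall v, cball0 r v -> `|phi v| <= Rb) ->
  c_superdiff h phi x y -> 1 < enorm (x - y) - s ->
  (enorm (x - y) - s) `^ (p - 1) * s <= 2 * kappa * Rb.
Proof.
move=> [_ [p_gt1 [kappa_ge1 [omega [_ [omega_der [h_omega omega'_bound]]]]]]].
move=> s_gt0 xs_le phi_bound sd.
set D := enorm (x - y); set a := D - s => a_gt1.
have kappa_gt0 : 0 < kappa by apply: lt_le_trans kappa_ge1.
have [D_gt1 s_leD] : 1 < D /\ s <= D by rewrite /a in a_gt1; split; lra.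
have [v [vx vy]] : exists v, enorm (v - x) = s /\ enorm (v - y) = a.
  by apply: segment_point; [exact: lt_trans ltr01 D_gt1 | rewrite ltW].
have v_ball : cball0 r v.
  have -> : v = x + (v - x) by rewrite addrC subrK.
  by apply: le_trans (enormD _ _) _; rewrite vx.
have x_ball : cball0 r x by rewrite /cball0 /=; lra.
have omega_incr : omega D - omega a <= 2 * Rb.
  have := sd v; rewrite /cost h_omega -/D ?h_omega ?vy -/a //.
  have := phi_bound _ v_ball; have := phi_bound _ x_ball.
  rewrite !ler_norml => /andP[? ?] /andP[? ?]; lra.
have omega_grow : kappa^-1 * a `^ (p - 1) * (D - a) <= omega D - omega a.
  have a_lt_D : 0 <= a < D by apply/andP; rewrite /a in a_gt1 *; split; lra.
  apply: increment_lower_bound a_lt_D _ _; rewrite ?invr_ge0 ?subr_ge0 ?ltW //.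
    by move=> z /andP[az _]; apply: omega_der; lra.
  move=> z /andP[az _]; apply: (H3_derive_lower_bound (x - y)) omega'_bound _ _.
    exact: lt_trans ltr01 D_gt1.
  exact: lt_trans a_gt1 az.
have Da : D - a = s by rewrite /a opprB addrC subrK.
have bound : kappa^-1 * (a `^ (p - 1) * s) <= 2 * Rb by rewrite mulrA -Da; lra.
rewrite -(mulVKf (lt0r_neq0 kappa_gt0) (a `^ _ * s)).
have -> : 2 * kappa * Rb = kappa * (2 * Rb) by ring.
by rewrite ler_pM2l.
Qed.

Arguments superdiff_excess_bound {R d p kappa h phi Rb r} s {x y}.

Lemma powR_le_double (R : realType) (q u m : R) :
  0 <= q -> 0 <= u -> u <= 2 * m -> u `^ q <= 2 `^ q * m `^ q.
Proof.
move=> q_ge0 u_ge0 u_le; rewrite -powRM //; last by lra.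
by rewrite ge0_ler_powR ?nnegrE //; lra.
Qed.

Arguments powR_le_double {R q u} m.

Theorem mainTheorem13 (R : realType) (p kappa : R) :
  1 < p -> 1 <= kappa ->
  exists2 C : R, 0 < C &
    forall (d : nat) (h : 'rV[R]_d -> R),
      H0 h -> H3 p kappa h ->
      forall (Rb r : R) (phi : 'rV[R]_d -> R),
        4 <= Rb -> 4 <= r ->
        c_concave h phi ->
        (forall x : 'rV[R]_d, cball0 r x -> `|phi x| <= Rb) ->
        forall y, c_superdiff_set h phi (cball0 (r / 2)) y ->
          enorm y `^ (p - 1) <= C * (r `^ (p - 1) + Rb).
Proof.
move=> p_gt1 kappa_ge1; have q_ge0 : 0 <= p - 1 by rewrite subr_ge0 ltW.
exists (2 `^ (p - 1) * kappa); first by rewrite mulr_gt0 ?powR_gt0 //; lra.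
move=> d h _ hH3 Rb r phi Rb_ge4 r_ge4 _ phi_bound y [x x_ball sd].
set a := enorm (x - y) - r / 2.
have y_le : enorm y <= r + a.
  have -> : y = x + (y - x) by rewrite addrC subrK.
  by apply: le_trans (enormD _ _) _; rewrite enormB /a; move: x_ball; rewrite /cball0 /=; lra.
have two_q := powR_ge0 2 (p - 1); have r_q := powR_ge0 r (p - 1).
have [a_le|a_gt] := leP a r.
  apply: le_trans (powR_le_double r q_ge0 (enorm_ge0 y) _) _; first lra.
  rewrite -mulrA ler_wpM2l //; nra.
have a_q : a `^ (p - 1) <= kappa * Rb.
  have := superdiff_excess_bound (r / 2) hH3 _ _ phi_bound sd.
  have := powR_ge0 a (p - 1); move: x_ball; rewrite /cball0 /= -/a; nra.
apply: le_trans (powR_le_double a q_ge0 (enorm_ge0 y) _) _; first lra.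
rewrite -mulrA ler_wpM2l //; nra.
Qed.
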